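(* Let $q>1$, let $k$ be a positive integer and $0\le r<k$ an integer. For $s\in\mathbb C$ arbitrary when $|z|<1$, or $\Re(s)>k$ when $|z|=1$ (the variable of integration $a$ ranging over $a\in\mathbb C\setminus\mathbb Z_0^-$), $$\int_0^1\Phi_{k-r}\bigl(z,s,a+(k-r)\bigr)\,d_qa=z^{-(k-r)}\sum_{l=0}^\infty\binom{-s}{l}\frac{\mathrm{Li}_{k-r}(z,s+l)}{[l+1]_q}.$$
   Context: $\mathbb Z_0^-=\{0,-1,-2,\ldots\}$. For $q>1$, the Jackson integral is $\int_0^1 f(a)\,d_qa=(q-1)\sum_{n=1}^\infty f(q^{-n})q^{-n}$, and $[x]_q=\frac{q^{x}-1}{q-1}$. The multiple Hurwitz-Lerch zeta function is $\Phi_j(z,s,a)=\sum_{m_1,\ldots,m_j=0}^\infty\frac{z^{m_1+\dots+m_j}}{(m_1+\dots+m_j+a)^{s}}$, and the multiple Lipschitz-Lerch zeta function is $\mathrm{Li}_j(z,s)=\sum_{m_1,\ldots,m_j=1}^\infty\frac{z^{m_1+\dots+m_j}}{(m_1+\dots+m_j)^{s}}$, both with $s\in\mathbb C$ when $|z|<1$ and $\Re(s)>j$ when $|z|=1$. $\binom{-s}{l}=\frac{(-s)(-s-1)\cdots(-s-l+1)}{l!}$. *)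

From Stdlib Require Import Reals.
From Coquelicot Require Import Coquelicot.

Open Scope R_scope.

Definition csum (a : nat -> C) : C :=
  (Series (fun n => Re (a n)), Series (fun n => Im (a n))).

(* x^s = exp(s ln x) for a positive real base x and complex exponent s. *)
Definition cpow (x : R) (s : C) : C :=
  let t := Im s * ln x in
  (exp (Re s * ln x) * cos t, exp (Re s * ln x) * sin t).

(* Iterated multiple sum  sum_{m_1,...,m_j >= b} g(m_1 + ... + m_j). *)
Fixpoint msum (b j : nat) (g : nat -> C) : C :=
  match j with
  | O => g O
  | S j' => csum (fun m => msum b j' (fun t => g (m + b + t)%nat))
  end.

Definition Phi (j : nat) (z s : C) (a : R) : C :=
  msum 0 j (fun M => Cmult (pow_n z M) (Cinv (cpow (INR M + a) s))).

Definition Li (j : nat) (z s : C) : C :=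
  msum 1 j (fun M => Cmult (pow_n z M) (Cinv (cpow (INR M) s))).

Definition jackson01 (q : R) (f : R -> C) : C :=
  Cmult (RtoC (q - 1))
    (csum (fun n => Cmult (f (/ q ^ (S n))) (RtoC (/ q ^ (S n))))).

Definition qnum (q : R) (x : nat) : R := (q ^ x - 1) / (q - 1).

Fixpoint cfalling (w : C) (l : nat) : C :=
  match l with
  | O => RtoC 1
  | S l' => Cmult (cfalling w l') (Cminus w (RtoC (INR l')))
  end.
Definition cbinom (w : C) (l : nat) : C :=
  Cmult (cfalling w l) (Cinv (RtoC (INR (Factorial.fact l)))).

From Stdlib Require Import Reals Lra Lia FunctionalExtensionality.
From Coquelicot Require Import Coquelicot.
Open Scope R_scope.

(* For [0 < a < 1] the binomial series
     [(M + j + a)^-s = sum_l binom(-s, l) a^l (M + j)^(-s-l)]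
   turns [Phi_j(z, s, a + j)] into the power series
   [sum_l binom(-s, l) z^-j Li_j(z, s + l) a^l] (shifting every summation index by one),
   and the Jackson integral of [a^l] over [0, 1] is [1 / [l+1]_q].  All rearrangements are
   absolute: [|binom(-s, l)| q^-l] is summable, and [|z|^M (M + j)^-Re(s)] is dominated by
   [C (M + j)^-p] with [p > j] ([p = j + 1] from the geometric decay when [|z| < 1],
   [p = Re s] when [|z| = 1]), which is summable over [j] indices.  The binomial series itself
   follows from the vanishing derivative of its product with [(1 + t)^s]. *)

Lemma Series_zero : Series (fun _ => 0) = 0.
Proof. rewrite (Series_ext _ (fun _ => 0 * 0)), Series_scal_l; [ring | intros; ring]. Qed.

(* Coquelicot states these for arbitrary normed modules, in a form that does not unify
   with the arithmetic of [R]. *)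
Lemma ex_series_Rscal_l (c : R) (a : nat -> R) : ex_series a -> ex_series (fun n => c * a n).
Proof. exact (ex_series_scal_l c a). Qed.

Lemma ex_series_Rabs_le (u b : nat -> R) :
  (forall n, Rabs (u n) <= b n) -> ex_series b -> ex_series u.
Proof. exact (ex_series_le u b). Qed.

Lemma Series_ge0 (v : nat -> R) : (forall n, 0 <= v n) -> ex_series v -> 0 <= Series v.
Proof.
  intros Hv Hs. rewrite <- Series_zero. apply Series_le; auto. intros n; split; [lra | auto].
Qed.

Lemma Rabs_Series_le (u b : nat -> R) :
  (forall n, Rabs (u n) <= b n) -> ex_series b -> Rabs (Series u) <= Series b.
Proof.
  intros Hub Hb.
  assert (Habs : ex_series (fun n => Rabs (u n))).
  { apply (ex_series_Rabs_le _ b); auto. intros n. apply (Rle_trans _ (Rabs (u n))); auto.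
    right; apply Rabs_Rabsolu. }
  eapply Rle_trans; [apply Series_Rabs; auto|].
  apply Series_le; auto. intros n; split; [apply Rabs_pos | auto].
Qed.

Lemma Series_split (v : nat -> R) N : ex_series v ->
  Series v = sum_f_R0 v N + Series (fun l => v (S N + l)%nat).
Proof. intros Hv. rewrite (Series_incr_n v (S N)); auto. lia. Qed.

Lemma is_lim_seq_sum_f_R0 (v : nat -> R) : ex_series v ->
  is_lim_seq (fun N => sum_f_R0 v N) (Series v).
Proof.
  intros Hv. apply (is_lim_seq_ext (sum_n v)); [intros; apply sum_n_Reals|].
  apply Series_correct, Hv.
Qed.

Lemma is_lim_seq_Series_tail (e : nat -> R) : ex_series e ->
  is_lim_seq (fun N => Series (fun l => e (S N + l)%nat)) 0.
Proof.
  intros He. apply (is_lim_seq_ext (fun N => Series e - sum_f_R0 e N)).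
  - intros N. rewrite (Series_split e N); auto. ring.
  - replace (Finite 0) with (Finite (Series e - Series e)) by (f_equal; ring).
    apply is_lim_seq_minus'; [apply is_lim_seq_const | apply is_lim_seq_sum_f_R0; auto].
Qed.

Lemma is_lim_seq_tail_squeeze (u : nat -> R) (L C : R) (e : nat -> R) : ex_series e ->
  (forall N, Rabs (u N - L) <= C * Series (fun l => e (S N + l)%nat)) -> is_lim_seq u L.
Proof.
  intros He Hu. set (T := fun N => Series (fun l => e (S N + l)%nat)).
  apply (is_lim_seq_le_le (fun N => L - C * T N) _ (fun N => L + C * T N)).
  - intros N. specialize (Hu N). apply Rabs_le_between' in Hu. unfold T. lra.
  - replace (Finite L) with (Finite (L - C * 0)) by (f_equal; ring).
    apply is_lim_seq_minus'; [apply is_lim_seq_const|].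
    apply is_lim_seq_mult'; [apply is_lim_seq_const | apply is_lim_seq_Series_tail; auto].
  - replace (Finite L) with (Finite (L + C * 0)) by (f_equal; ring).
    apply is_lim_seq_plus'; [apply is_lim_seq_const|].
    apply is_lim_seq_mult'; [apply is_lim_seq_const | apply is_lim_seq_Series_tail; auto].
Qed.

Lemma Series_sum_f_R0 (u : nat -> nat -> R) N : (forall l, ex_series (fun m => u m l)) ->
  ex_series (fun m => sum_f_R0 (u m) N) /\
  Series (fun m => sum_f_R0 (u m) N) = sum_f_R0 (fun l => Series (fun m => u m l)) N.
Proof.
  intros H. induction N as [|N [IH1 IH2]]; simpl; auto.
  split; [exact (ex_series_plus _ (fun m => u m (S N)) IH1 (H (S N)))|].
  rewrite Series_plus, IH2; auto.
Qed.

(* The partial sums [sum_(l <= N) sum_m u m l] differ from [sum_m sum_l u m l] by at most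
   [Series A] times the [N]-th tail of [e]. *)
Lemma Series_Series_swap (u : nat -> nat -> R) (A e : nat -> R) :
  (forall m l, Rabs (u m l) <= A m * e l) -> (forall m, 0 <= A m) -> (forall l, 0 <= e l) ->
  ex_series A -> ex_series e ->
  Series (fun m => Series (fun l => u m l)) = Series (fun l => Series (fun m => u m l)).
Proof.
  intros Hu HA He HsA Hse.
  assert (Hm : forall m, ex_series (fun l => u m l)).
  { intros m. apply (ex_series_Rabs_le _ (fun l => A m * e l)); auto.
    apply ex_series_Rscal_l; auto. }
  assert (Hl : forall l, ex_series (fun m => u m l)).
  { intros l. apply (ex_series_Rabs_le _ (fun m => A m * e l)); auto.
    apply ex_series_scal_r; auto. }
  set (F := fun m => Series (fun l => u m l)).
  set (G := fun l => Series (fun m => u m l)).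
  set (T := fun N => Series (fun l => e (S N + l)%nat)).
  assert (HF : ex_series F).
  { apply (ex_series_Rabs_le _ (fun m => A m * Series e)); [|apply ex_series_scal_r; auto].
    intros m. unfold F. rewrite <- Series_scal_l. apply Rabs_Series_le; auto.
    apply ex_series_Rscal_l; auto. }
  assert (HG : ex_series G).
  { apply (ex_series_Rabs_le _ (fun l => Series A * e l)); [|apply ex_series_Rscal_l; auto].
    intros l. unfold G. rewrite <- Series_scal_r. apply Rabs_Series_le; auto.
    apply ex_series_scal_r; auto. }
  assert (Hrow : forall m N, Rabs (sum_f_R0 (u m) N - F m) <= A m * T N).
  { intros m N. unfold F. rewrite (Series_split (fun l => u m l) N); auto.
    change (fun l => u m l) with (u m).
    match goal with |- Rabs (?a - (?a + ?b)) <= _ => replace (a - (a + b)) with (- b) by ring end.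
    rewrite Rabs_Ropp.
    unfold T. rewrite <- Series_scal_l. apply Rabs_Series_le; auto.
    apply ex_series_Rscal_l, ex_series_incr_n; auto. }
  assert (Hpartial : forall N, Rabs (sum_f_R0 G N - Series F) <= Series A * T N).
  { intros N. destruct (Series_sum_f_R0 u N Hl) as [E1 E2]. fold G in E2.
    rewrite <- E2, <- Series_minus, <- Series_scal_r; auto.
    apply Rabs_Series_le; auto. apply ex_series_scal_r; auto. }
  assert (Hlim := is_lim_seq_tail_squeeze (fun N => sum_f_R0 G N) _ _ e Hse Hpartial).
  apply is_lim_seq_unique in Hlim.
  rewrite (is_lim_seq_unique _ _ (is_lim_seq_sum_f_R0 G HG)) in Hlim.
  injection Hlim; auto.
Qed.

(* The l1 norm |Re x| + |Im x| is the natural norm for [csum], which sums the real and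
   imaginary parts separately. *)
Definition cnorm1 (x : C) : R := Rabs (Re x) + Rabs (Im x).

Lemma cnorm1_ge0 x : 0 <= cnorm1 x.
Proof. unfold cnorm1; generalize (Rabs_pos (Re x)) (Rabs_pos (Im x)); lra. Qed.

Lemma cnorm1_Re x : Rabs (Re x) <= cnorm1 x.
Proof. unfold cnorm1; generalize (Rabs_pos (Im x)); lra. Qed.

Lemma cnorm1_Im x : Rabs (Im x) <= cnorm1 x.
Proof. unfold cnorm1; generalize (Rabs_pos (Re x)); lra. Qed.

Lemma cnorm1_mult x y : cnorm1 (Cmult x y) <= cnorm1 x * cnorm1 y.
Proof.
  destruct x as [a b], y as [c d]. unfold cnorm1, Cmult, Re, Im; simpl.
  eapply Rle_trans; [apply Rplus_le_compat; apply Rabs_triang|].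
  rewrite !Rabs_Ropp, !Rabs_mult.
  generalize (Rabs_pos a) (Rabs_pos b) (Rabs_pos c) (Rabs_pos d). nra.
Qed.

Lemma cnorm1_RtoC r : cnorm1 (RtoC r) = Rabs r.
Proof. unfold cnorm1, RtoC, Re, Im; simpl. rewrite Rabs_R0; ring. Qed.

Lemma Cmod_le_cnorm1 u : Cmod u <= cnorm1 u.
Proof.
  destruct u as [a b]. unfold Cmod, cnorm1, Re, Im; simpl.
  rewrite <- (sqrt_pow2 (Rabs a + Rabs b)) by (generalize (Rabs_pos a) (Rabs_pos b); lra).
  apply sqrt_le_1_alt. generalize (pow2_abs a) (pow2_abs b) (Rabs_pos a) (Rabs_pos b); nra.
Qed.

Lemma cnorm1_le_Cmod u : cnorm1 u <= 2 * Cmod u.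
Proof.
  assert (Him : Rabs (Im u) <= Cmod u).
  { unfold Cmod. rewrite <- sqrt_Rsqr_abs. apply sqrt_le_1_alt.
    destruct u as [a b]; unfold Rsqr, Im; simpl. nra. }
  unfold cnorm1. generalize (re_le_Cmod u). lra.
Qed.

Lemma csum_ext (a b : nat -> C) : (forall n, a n = b n) -> csum a = csum b.
Proof. intros H. unfold csum. f_equal; apply Series_ext; intros; rewrite H; auto. Qed.

Lemma csum_RtoC (v : nat -> R) : csum (fun n => RtoC (v n)) = RtoC (Series v).
Proof. unfold csum, RtoC; simpl. f_equal. apply Series_zero. Qed.

Definition ex_csum (a : nat -> C) : Prop :=
  ex_series (fun n => Re (a n)) /\ ex_series (fun n => Im (a n)).

Lemma ex_csum_le (a : nat -> C) (b : nat -> R) :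
  (forall n, cnorm1 (a n) <= b n) -> ex_series b -> ex_csum a.
Proof.
  intros H Hb. split; apply (ex_series_Rabs_le _ b); auto; intros n;
    eapply Rle_trans; [apply cnorm1_Re | apply H | apply cnorm1_Im | apply H].
Qed.

Lemma cnorm1_csum_le (a : nat -> C) (b : nat -> R) :
  (forall n, cnorm1 (a n) <= b n) -> ex_series b -> cnorm1 (csum a) <= Series b.
Proof.
  intros H Hb. unfold cnorm1 at 1; cbn [csum Re Im fst snd].
  assert (Hre : forall n, Rabs (Re (a n)) <= b n)
    by (intros n; eapply Rle_trans; [apply cnorm1_Re | apply H]).
  assert (Him : forall n, Rabs (Im (a n)) <= b n)
    by (intros n; eapply Rle_trans; [apply cnorm1_Im | apply H]).
  assert (Ere : ex_series (fun n => Rabs (Re (a n))))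
    by (apply (ex_series_Rabs_le _ b); auto; intros; rewrite Rabs_Rabsolu; auto).
  assert (Eim : ex_series (fun n => Rabs (Im (a n))))
    by (apply (ex_series_Rabs_le _ b); auto; intros; rewrite Rabs_Rabsolu; auto).
  eapply Rle_trans; [apply Rplus_le_compat; apply Series_Rabs; auto|].
  rewrite <- Series_plus; auto. apply Series_le; auto.
  intros n; split; [generalize (Rabs_pos (Re (a n))) (Rabs_pos (Im (a n))); lra | apply H].
Qed.

Lemma csum_scal_l (c : C) (a : nat -> C) :
  ex_csum a -> csum (fun n => Cmult c (a n)) = Cmult c (csum a).
Proof.
  intros [H1 H2]. destruct c as [c1 c2]. unfold csum, Cmult; simpl. f_equal.
  - rewrite <- !Series_scal_l, <- Series_minus; auto; apply ex_series_Rscal_l; auto.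
  - rewrite <- !Series_scal_l, <- Series_plus; auto; apply ex_series_Rscal_l; auto.
Qed.

Lemma csum_csum_swap (X : nat -> nat -> C) (A e : nat -> R) :
  (forall m l, cnorm1 (X m l) <= A m * e l) -> (forall m, 0 <= A m) -> (forall l, 0 <= e l) ->
  ex_series A -> ex_series e ->
  csum (fun m => csum (fun l => X m l)) = csum (fun l => csum (fun m => X m l)).
Proof.
  intros H HA He HsA Hse. unfold csum at 1 3. f_equal; cbn [fst snd].
  - apply (Series_Series_swap (fun m l => Re (X m l)) A e); auto.
    intros m l; eapply Rle_trans; [apply cnorm1_Re | apply H].
  - apply (Series_Series_swap (fun m l => Im (X m l)) A e); auto.
    intros m l; eapply Rle_trans; [apply cnorm1_Im | apply H].
Qed.

(* Real counterpart of [msum 0] together with its summability condition; the [m + 0 + t]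
   keeps both convertible with the unfolding of [msum 0]. *)
Fixpoint msumR (j : nat) (h : nat -> R) : R :=
  match j with
  | O => h O
  | S j' => Series (fun m => msumR j' (fun t => h (m + 0 + t)%nat))
  end.

Fixpoint msummable (j : nat) (h : nat -> R) : Prop :=
  match j with
  | O => True
  | S j' => (forall m, msummable j' (fun t => h (m + 0 + t)%nat)) /\
            ex_series (fun m => msumR j' (fun t => h (m + 0 + t)%nat))
  end.

Lemma msumR_ge0 j : forall h, (forall M, 0 <= h M) -> msummable j h -> 0 <= msumR j h.
Proof.
  induction j as [|j IH]; intros h Hh Hs; simpl; auto.
  destruct Hs as [Hs1 Hs2]. apply Series_ge0; auto.
Qed.

Lemma msummable_scal j : forall c h, 0 <= c -> msummable j h ->
  msummable j (fun M => c * h M) /\ msumR j (fun M => c * h M) = c * msumR j h.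
Proof.
  induction j as [|j IH]; intros c h Hc Hs; simpl; auto.
  destruct Hs as [Hs1 Hs2].
  assert (K := fun m => IH c (fun t => h (m + 0 + t)%nat) Hc (Hs1 m)).
  rewrite (Series_ext _ (fun m => c * msumR j (fun t => h (m + 0 + t)%nat)))
    by (intros m; apply K).
  rewrite Series_scal_l. split; auto. split; [intros m; apply K|].
  apply (ex_series_ext (fun m => c * msumR j (fun t => h (m + 0 + t)%nat))).
  - intros m; symmetry; apply K.
  - apply ex_series_Rscal_l; auto.
Qed.

Lemma cnorm1_msum_le j : forall (G : nat -> C) h,
  (forall M, cnorm1 (G M) <= h M) -> msummable j h -> cnorm1 (msum 0 j G) <= msumR j h.
Proof.
  induction j as [|j IH]; intros G h HG Hs; simpl; auto.
  destruct Hs as [Hs1 Hs2]. apply cnorm1_csum_le; auto.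
Qed.

Lemma msum_ext b j g g' : (forall M, g M = g' M) -> msum b j g = msum b j g'.
Proof. intros H. replace g' with g by (apply functional_extensionality; auto). auto. Qed.

Lemma msum_scal_l j : forall (c : C) (G : nat -> C) h,
  (forall M, cnorm1 (G M) <= h M) -> msummable j h ->
  msum 0 j (fun M => Cmult c (G M)) = Cmult c (msum 0 j G).
Proof.
  induction j as [|j IH]; intros c G h HG Hs; simpl; auto.
  destruct Hs as [Hs1 Hs2].
  rewrite (csum_ext _ (fun m => Cmult c (msum 0 j (fun t => G (m + 0 + t)%nat))))
    by (intros m; apply (IH c _ (fun t => h (m + 0 + t)%nat)); auto).
  apply csum_scal_l, (ex_csum_le _ (fun m => msumR j (fun t => h (m + 0 + t)%nat))); auto.
  intros m. apply cnorm1_msum_le; auto.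
Qed.

Lemma msum_csum_swap j : forall (F : nat -> nat -> C) h e,
  (forall M l, cnorm1 (F M l) <= h M * e l) -> (forall M, 0 <= h M) -> (forall l, 0 <= e l) ->
  msummable j h -> ex_series e ->
  msum 0 j (fun M => csum (F M)) = csum (fun l => msum 0 j (fun M => F M l)).
Proof.
  induction j as [|j IH]; intros F h e HF Hh He Hs Hse; simpl; [apply csum_ext; auto|].
  destruct Hs as [Hs1 Hs2].
  rewrite (csum_ext _ (fun m => csum (fun l => msum 0 j (fun t => F (m + 0 + t)%nat l))))
    by (intros m; apply (IH (fun t => F (m + 0 + t)%nat) (fun t => h (m + 0 + t)%nat) e); auto).
  apply (csum_csum_swap _ (fun m => msumR j (fun t => h (m + 0 + t)%nat)) e); auto.
  - intros m l. rewrite Rmult_comm.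
    destruct (msummable_scal j (e l) (fun t => h (m + 0 + t)%nat) (He l) (Hs1 m)) as [S1 S2].
    rewrite <- S2. apply cnorm1_msum_le; auto. intros M. rewrite Rmult_comm; auto.
  - intros m. apply msumR_ge0; auto.
Qed.

Lemma msum_shift j : forall g, msum 1 j g = msum 0 j (fun M => g (M + j)%nat).
Proof.
  induction j as [|j IH]; intros g; simpl; [f_equal|].
  apply csum_ext; intros m. rewrite IH. apply msum_ext. intros t. f_equal. lia.
Qed.

Lemma exp_le_compat x y : x <= y -> exp x <= exp y.
Proof. intros [H | ->]; [left; apply exp_increasing; auto | lra]. Qed.

Lemma ln_le_sub_1 x : 0 < x -> ln x <= x - 1.
Proof.
  intros Hx. rewrite <- (ln_exp (x - 1)). apply ln_le; auto.
  generalize (exp_ineq1_le (x - 1)); lra.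
Qed.

(* The factor [2^p] absorbs [((y+1)/y)^p <= 2^p]. *)
Lemma Rpower_opp_le_telescope p y : 1 < p -> 1 <= y ->
  Rpower y (-p) <= Rpower 2 p / (p - 1) * (Rpower y (1 - p) - Rpower (y + 1) (1 - p)).
Proof.
  intros Hp Hy. unfold Rpower.
  set (Ly := ln y). set (L1 := ln (y + 1)). set (L2 := ln 2).
  assert (HL : Ly - L1 <= - / (y + 1)).
  { unfold Ly, L1. replace (ln y - ln (y + 1)) with (ln (y / (y + 1))).
    - eapply Rle_trans; [apply ln_le_sub_1, Rdiv_lt_0_compat; lra|].
      right. field. lra.
    - unfold Rdiv. rewrite ln_mult, ln_Rinv; try lra. apply Rinv_0_lt_compat; lra. }
  assert (HL2 : L1 <= L2 + Ly).
  { unfold L1, L2, Ly. rewrite <- ln_mult; try lra. apply ln_le; lra. }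
  assert (E1 : exp ((1 - p) * Ly) = exp ((1 - p) * L1) * exp ((1 - p) * (Ly - L1)))
    by (rewrite <- exp_plus; f_equal; ring).
  assert (B1 : 1 + (p - 1) * / (y + 1) <= exp ((1 - p) * (Ly - L1)))
    by (eapply Rle_trans; [|apply exp_ineq1_le]; nra).
  assert (E2 : exp ((1 - p) * L1) * / (y + 1) = exp (- p * L1)).
  { unfold L1. replace ((1 - p) * ln (y + 1)) with (- p * ln (y + 1) + ln (y + 1)) by ring.
    rewrite exp_plus, exp_ln by lra. field. lra. }
  assert (B2 : exp (- p * Ly) <= exp (p * L2) * exp (- p * L1))
    by (rewrite <- exp_plus; apply exp_le_compat; nra).
  assert (Pe : 0 < exp ((1 - p) * L1)) by apply exp_pos.
  assert (Pe2 : 0 < exp (p * L2)) by apply exp_pos.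
  assert (0 < / (y + 1)) by (apply Rinv_0_lt_compat; lra).
  rewrite E1. eapply Rle_trans; [apply B2|]. rewrite <- E2.
  apply Rle_trans with (exp (p * L2) / (p - 1) * (exp ((1 - p) * L1) * ((p - 1) * / (y + 1)))).
  - right. field. lra.
  - apply Rmult_le_compat_l; [apply Rlt_le, Rdiv_lt_0_compat; lra | nra].
Qed.

Lemma ex_series_bounded_ge0 (a : nat -> R) (B : R) : (forall n, 0 <= a n) ->
  (forall N, sum_f_R0 a N <= B) -> ex_series a /\ Series a <= B.
Proof.
  intros Ha HB. destruct (growing_cv (fun N => sum_f_R0 a N)) as [l Hl].
  - intros n. simpl. generalize (Ha (S n)); lra.
  - exists B. intros x [N ->]. auto.
  - apply is_lim_seq_Reals in Hl.
    assert (Hs : is_series a l).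
    { change (is_lim_seq (sum_n a) l). apply (is_lim_seq_ext (fun N => sum_f_R0 a N)); auto.
      intros; symmetry; apply sum_n_Reals. }
    split; [exists l; auto|]. rewrite (is_series_unique _ _ Hs).
    exact (is_lim_seq_le _ (fun _ => B) l B HB Hl (is_lim_seq_const B)).
Qed.

Lemma sum_f_R0_telescope (g : nat -> R) N : sum_f_R0 (fun m => g m - g (S m)) N = g O - g (S N).
Proof. induction N; simpl; auto. rewrite IHN. ring. Qed.

Lemma Rpower_series_shift p c : 1 < p -> 1 <= c ->
  ex_series (fun m => Rpower (INR m + c) (-p)) /\
  Series (fun m => Rpower (INR m + c) (-p)) <= Rpower 2 p / (p - 1) * Rpower c (1 - p).
Proof.
  intros Hp Hc. set (K := Rpower 2 p / (p - 1)).
  assert (HK : 0 <= K) by (apply Rlt_le, Rdiv_lt_0_compat; [apply exp_pos | lra]).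
  set (g := fun m => Rpower (INR m + c) (1 - p)).
  apply ex_series_bounded_ge0; [intros n; apply Rlt_le, exp_pos|].
  intros N. apply Rle_trans with (sum_f_R0 (fun m => K * (g m - g (S m))) N).
  - apply sum_Rle. intros m _. unfold g. rewrite S_INR.
    replace (INR m + 1 + c) with ((INR m + c) + 1) by ring.
    apply Rpower_opp_le_telescope; auto. generalize (pos_INR m); lra.
  - rewrite (sum_eq _ (fun m => (g m - g (S m)) * K)) by (intros; ring).
    rewrite <- scal_sum, sum_f_R0_telescope. unfold g.
    replace (INR 0 + c) with c by (simpl; ring).
    assert (0 < Rpower (INR (S N) + c) (1 - p)) by apply exp_pos. nra.
Qed.

(* Each of the [j] summations lowers the exponent by one, which is why [p > j] is needed. *)
Lemma msummable_Rpower j : forall p, INR j < p -> exists K, 0 <= K /\ forall c, 1 <= c ->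
  msummable j (fun M => Rpower (INR M + c) (-p)) /\
  msumR j (fun M => Rpower (INR M + c) (-p)) <= K * Rpower c (INR j - p).
Proof.
  induction j as [|j IH]; intros p Hp.
  - exists 1. split; [lra|]. intros c Hc. cbn. split; auto.
    rewrite Rplus_0_l, Rminus_0_l. lra.
  - rewrite S_INR in Hp. destruct (IH p ltac:(lra)) as [K [HK Hj]].
    set (p' := p - INR j).
    set (K' := Rpower 2 p' / (p' - 1)).
    assert (HK' : 0 <= K') by (apply Rlt_le, Rdiv_lt_0_compat; [apply exp_pos | unfold p'; lra]).
    exists (K * K'). split; [apply Rmult_le_pos; auto|]. intros c Hc. cbn [msummable msumR].
    assert (Eshift : forall m, (fun t => Rpower (INR (m + 0 + t) + c) (-p)) =
                               (fun t => Rpower (INR t + (INR m + c)) (-p))).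
    { intros m. apply functional_extensionality. intros t. rewrite !plus_INR. simpl.
      f_equal. ring. }
    assert (Hm : forall m, msummable j (fun t => Rpower (INR t + (INR m + c)) (-p)) /\
       msumR j (fun t => Rpower (INR t + (INR m + c)) (-p)) <= K * Rpower (INR m + c) (- p')).
    { intros m. replace (- p') with (INR j - p) by (unfold p'; ring).
      apply Hj. generalize (pos_INR m); lra. }
    destruct (Rpower_series_shift p' c) as [T1 T2]; [unfold p'; lra | auto |].
    assert (Dom : forall m, 0 <= msumR j (fun t => Rpower (INR t + (INR m + c)) (-p)) <=
                            K * Rpower (INR m + c) (- p')).
    { intros m. split; [|apply Hm]. apply msumR_ge0; [intros; apply Rlt_le, exp_pos | apply Hm]. }
    assert (Ex : ex_series (fun m => msumR j (fun t => Rpower (INR t + (INR m + c)) (-p)))).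
    { apply (ex_series_Rabs_le _ (fun m => K * Rpower (INR m + c) (- p'))).
      - intros m. rewrite Rabs_pos_eq; apply Dom.
      - apply ex_series_Rscal_l; auto. }
    assert (Esum : (fun m => msumR j (fun t => Rpower (INR (m + 0 + t) + c) (-p))) =
                   (fun m => msumR j (fun t => Rpower (INR t + (INR m + c)) (-p))))
      by (apply functional_extensionality; intros m; rewrite Eshift; auto).
    rewrite Esum. split; [split; auto; intros m; rewrite Eshift; apply Hm|].
    eapply Rle_trans; [apply Series_le; [apply Dom | apply ex_series_Rscal_l; auto]|].
    rewrite Series_scal_l, Rmult_assoc. apply Rmult_le_compat_l; auto.
    replace (INR (S j) - p) with (1 - p') by (unfold p'; rewrite S_INR; ring). auto.
Qed.

Lemma pow_Rpower_bounded (rho c e : R) : 0 < rho < 1 -> 1 <= c ->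
  exists K, 0 <= K /\ forall M : nat, rho ^ M * Rpower (INR M + c) e <= K.
Proof.
  intros Hr Hc. set (e' := Rmax e 1).
  assert (He' : 1 <= e') by apply Rmax_r.
  set (lam := - ln rho).
  assert (Hl : 0 < lam).
  { unfold lam. generalize (ln_increasing rho 1 (proj1 Hr) (proj2 Hr)). rewrite ln_1. lra. }
  set (eps := lam / e').
  assert (Heps : 0 < eps) by (apply Rdiv_lt_0_compat; lra).
  (* [ln X <= eps X - 1 - ln eps] turns [X^e'] into an exponential that [rho^M] beats. *)
  exists (exp (lam * c - e' - e' * ln eps)). split; [apply Rlt_le, exp_pos|].
  intros M. set (X := INR M + c). assert (HX : 1 <= X) by (unfold X; generalize (pos_INR M); lra).
  rewrite <- (Rpower_pow M rho) by lra.
  apply Rle_trans with (Rpower rho (INR M) * Rpower X e').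
  { apply Rmult_le_compat_l; [apply Rlt_le, exp_pos|]. apply Rle_Rpower; auto. apply Rmax_l. }
  unfold Rpower. rewrite <- exp_plus. apply exp_le_compat.
  assert (HlnX : ln X <= eps * X - 1 - ln eps).
  { assert (H1 := ln_le_sub_1 (eps * X)). rewrite ln_mult in H1; try lra. nra. }
  replace (ln rho) with (- lam) by (unfold lam; ring).
  assert (H : e' * ln X <= e' * (eps * X - 1 - ln eps)) by (apply Rmult_le_compat_l; lra).
  replace (e' * (eps * X - 1 - ln eps)) with (lam * X - e' - e' * ln eps) in H
    by (unfold eps; field; lra).
  replace (lam * X) with (lam * INR M + lam * c) in H by (unfold X; ring). lra.
Qed.

(* [binom_rising W n = W (W+1) ... (W+n-1) / n!] majorizes [|binom(w, n)|] for [W = |w|]. *)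
Fixpoint binom_rising (W : R) (n : nat) : R :=
  match n with
  | O => 1
  | S n' => binom_rising W n' * ((W + INR n') / (INR n' + 1))
  end.

Lemma binom_rising_ge0 W n : 0 <= W -> 0 <= binom_rising W n.
Proof.
  intros HW. induction n; simpl; [lra|]. assert (Hn := pos_INR n).
  apply Rmult_le_pos; auto. apply Rdiv_le_0_compat; lra.
Qed.

Lemma sum_f_R0_ge_term (x : nat -> R) N n :
  (forall i, 0 <= x i) -> (n <= N)%nat -> x n <= sum_f_R0 x N.
Proof.
  intros Hx. induction N; intros Hn; [replace n with O by lia; simpl; lra|].
  simpl. destruct (Nat.eq_dec n (S N)) as [-> | Hne].
  - generalize (cond_pos_sum x N Hx); lra.
  - generalize (IHN ltac:(lia)) (Hx (S N)); lra.
Qed.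

(* The ratio [(W + n) r / (n + 1)] of consecutive terms drops below 1 once [n >= W / (1 - r)]. *)
Lemma binom_rising_geom_bounded W r : 0 <= W -> 0 <= r < 1 ->
  exists K, forall n, binom_rising W n * r ^ n <= K.
Proof.
  intros HW Hr. set (x := fun n => binom_rising W n * r ^ n).
  assert (Hx : forall n, 0 <= x n)
    by (intros n; apply Rmult_le_pos; [apply binom_rising_ge0; auto | apply pow_le; lra]).
  destruct (INR_archimed 1 (W / (1 - r))) as [N0 HN0]; [lra|]. rewrite Rmult_1_r in HN0.
  assert (Hdec : forall n, (N0 <= n)%nat -> x (S n) <= x n).
  { intros n Hn. unfold x. simpl.
    assert (Hn' : W / (1 - r) < INR n) by (apply le_INR in Hn; lra).
    assert (Hpos := pos_INR n).
    assert (Hratio : (W + INR n) / (INR n + 1) * r <= 1).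
    { apply Rmult_le_reg_r with (INR n + 1); [lra|].
      apply Rmult_lt_compat_r with (r := 1 - r) in Hn'; [|lra].
      unfold Rdiv in *. rewrite Rmult_assoc, Rinv_l in Hn' by lra. field_simplify; nra. }
    assert (0 <= x n) by apply Hx.
    assert (0 <= (W + INR n) / (INR n + 1) * r).
    { apply Rmult_le_pos; [|lra]. apply Rdiv_le_0_compat; lra. }
    replace (binom_rising W n * ((W + INR n) / (INR n + 1)) * (r * r ^ n)) with
      (x n * ((W + INR n) / (INR n + 1) * r)) by (unfold x; ring).
    change (binom_rising W n * r ^ n) with (x n). nra. }
  exists (sum_f_R0 x N0). intros n. fold (x n). induction n.
  - apply sum_f_R0_ge_term; auto. lia.
  - destruct (Compare_dec.le_lt_dec (S n) N0); [apply sum_f_R0_ge_term; auto|].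
    eapply Rle_trans; [apply Hdec; lia | auto].
Qed.

Lemma cbinom_0 w : cbinom w 0 = RtoC 1.
Proof.
  unfold cbinom. simpl cfalling. change (INR (Factorial.fact 0)) with 1.
  rewrite <- RtoC_inv, Rinv_1 by lra. apply Cmult_1_r.
Qed.

Lemma cbinom_S w l : cbinom w (S l) =
  Cmult (cbinom w l) (Cmult (Cminus w (RtoC (INR l))) (RtoC (/ INR (S l)))).
Proof.
  unfold cbinom. simpl cfalling. rewrite fact_simpl, mult_INR.
  assert (H1 := INR_fact_neq_0 l). assert (H2 : INR (S l) <> 0) by (apply not_0_INR; lia).
  rewrite RtoC_mult, RtoC_inv by auto.
  assert (H3 : RtoC (INR (S l)) <> RtoC 0) by (intro E; injection E; auto).
  assert (H4 : RtoC (INR (Factorial.fact l)) <> RtoC 0) by (intro E; injection E; auto).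
  field. split; auto.
Qed.

Lemma cnorm1_cbinom_le w l : cnorm1 (cbinom w l) <= binom_rising (cnorm1 w) l.
Proof.
  induction l; simpl binom_rising.
  - rewrite cbinom_0, cnorm1_RtoC, Rabs_R1. lra.
  - assert (Hn := pos_INR l).
    rewrite cbinom_S. eapply Rle_trans; [apply cnorm1_mult|].
    apply Rmult_le_compat; try apply cnorm1_ge0; auto.
    eapply Rle_trans; [apply cnorm1_mult|]. rewrite cnorm1_RtoC, S_INR, Rabs_pos_eq
      by (apply Rlt_le, Rinv_0_lt_compat; lra).
    apply Rmult_le_compat_r; [apply Rlt_le, Rinv_0_lt_compat; lra|].
    destruct w as [a b]. unfold cnorm1, Cminus, Cplus, Copp, RtoC, Re, Im; simpl.
    replace (b + - 0) with b by ring.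
    generalize (Rabs_triang a (- INR l)). rewrite Rabs_Ropp, (Rabs_pos_eq (INR l)); lra.
Qed.

Lemma ex_series_cbinom_geom (w : C) (x : R) : 0 <= x < 1 ->
  ex_series (fun l => cnorm1 (cbinom w l) * x ^ l).
Proof.
  intros Hx. set (r := (1 + x) / 2). assert (Hr : 0 < r < 1) by (unfold r; lra).
  destruct (binom_rising_geom_bounded (cnorm1 w) r (cnorm1_ge0 w)) as [K HK]; [lra|].
  apply (ex_series_Rabs_le _ (fun l => K * (x / r) ^ l)).
  - intros l. rewrite Rabs_pos_eq by (apply Rmult_le_pos; [apply cnorm1_ge0 | apply pow_le; lra]).
    replace (cnorm1 (cbinom w l) * x ^ l) with (cnorm1 (cbinom w l) * r ^ l * (x / r) ^ l).
    2: { unfold Rdiv. rewrite Rpow_mult_distr, pow_inv. field. apply pow_nonzero; lra. }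
    apply Rmult_le_compat_r; [apply pow_le, Rdiv_le_0_compat; lra|].
    eapply Rle_trans; [|apply (HK l)]. apply Rmult_le_compat_r; [apply pow_le; lra|].
    apply cnorm1_cbinom_le.
  - apply ex_series_Rscal_l, ex_series_geom. rewrite Rabs_pos_eq by (apply Rdiv_le_0_compat; lra).
    apply Rmult_lt_reg_r with r; [lra|].
    unfold Rdiv. rewrite Rmult_assoc, Rinv_l; [unfold r | ]; lra.
Qed.

Lemma PSeries_recurrence_ode (a b : nat -> R) (c1 c2 x : R) :
  Rbar_lt (Rabs x) (CV_radius a) -> Rbar_lt (Rabs x) (CV_radius b) ->
  (forall n, INR (S n) * a (S n) = a n * (c1 - INR n) - b n * c2) ->
  (1 + x) * PSeries (PS_derive a) x = c1 * PSeries a x - c2 * PSeries b x.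
Proof.
  intros Ha Hb Hrec.
  assert (Ea := CV_radius_inside _ _ Ha). assert (Eb := CV_radius_inside _ _ Hb).
  assert (Ed := ex_pseries_derive _ _ Ha).
  replace ((1 + x) * PSeries (PS_derive a) x) with
    (PSeries (PS_derive a) x + PSeries (PS_incr_1 (PS_derive a)) x)
    by (rewrite PSeries_incr_1; ring).
  rewrite <- PSeries_plus by (auto; apply ex_pseries_incr_1; auto).
  rewrite <- !PSeries_scal, <- PSeries_minus by (apply ex_pseries_scal; auto; apply Rmult_comm).
  apply PSeries_ext. intros n. unfold PS_plus, PS_minus, PS_scal, PS_incr_1, PS_derive.
  change (plus ?u ?v) with (u + v). change (scal ?u ?v) with (u * v).
  change (opp ?u) with (- u).
  destruct n as [|n]; rewrite Hrec; [change (zero : R) with 0; simpl|]; ring.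
Qed.

Lemma is_derive_0_const (h : R -> R) t : 0 <= t < 1 ->
  (forall x, Rabs x < 1 -> is_derive h x 0) -> h t = h 0.
Proof.
  intros Ht Hd. destruct (MVT_gen h 0 t (fun _ => 0)) as [c [_ Hc]]; [| |lra].
  - intros x Hx. apply Hd. rewrite Rmin_left, Rmax_right in Hx by lra. apply Rabs_def1; lra.
  - intros x Hx. rewrite Rmin_left, Rmax_right in Hx by lra.
    apply continuity_pt_filterlim, (ex_derive_continuous h x). exists 0. apply Hd.
    apply Rabs_def1; lra.
Qed.

Section BinomialSeries.

Variable s : C.

Definition binom_re (l : nat) : R := Re (cbinom (Copp s) l).
Definition binom_im (l : nat) : R := Im (cbinom (Copp s) l).

Lemma binom_re_S n :
  INR (S n) * binom_re (S n) = binom_re n * (- Re s - INR n) - binom_im n * (- Im s).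
Proof.
  unfold binom_re, binom_im. rewrite cbinom_S.
  assert (H : INR (S n) <> 0) by (apply not_0_INR; lia).
  destruct (cbinom (Copp s) n) as [x y]. destruct s as [u v].
  unfold Cmult, Cminus, Cplus, Copp, RtoC, Re, Im; simpl. field; auto.
Qed.

Lemma binom_im_S n :
  INR (S n) * binom_im (S n) = binom_im n * (- Re s - INR n) - binom_re n * Im s.
Proof.
  unfold binom_re, binom_im. rewrite cbinom_S.
  assert (H : INR (S n) <> 0) by (apply not_0_INR; lia).
  destruct (cbinom (Copp s) n) as [x y]. destruct s as [u v].
  unfold Cmult, Cminus, Cplus, Copp, RtoC, Re, Im; simpl. field; auto.
Qed.

Lemma CV_radius_binom_gt (a : nat -> R) (x : R) :
  (forall n, Rabs (a n) <= cnorm1 (cbinom (Copp s) n)) ->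
  Rabs x < 1 -> Rbar_lt (Rabs x) (CV_radius a).
Proof.
  intros Ha Hx. assert (Hx0 := Rabs_pos x).
  set (r := (Rabs x + 1) / 2). assert (Hr : 0 <= r) by (unfold r; lra).
  destruct (binom_rising_geom_bounded (cnorm1 (Copp s)) r (cnorm1_ge0 _)) as [K HK];
    [unfold r; lra|].
  apply Rbar_lt_le_trans with (Finite r); [simpl; unfold r; lra|].
  apply CV_radius_bounded. exists K. intros n.
  rewrite Rabs_mult, (Rabs_pos_eq (r ^ n)) by (apply pow_le; auto).
  eapply Rle_trans; [|apply (HK n)]. apply Rmult_le_compat_r; [apply pow_le; auto|].
  eapply Rle_trans; [apply Ha | apply cnorm1_cbinom_le].
Qed.

Lemma CV_radius_binom_re x : Rabs x < 1 -> Rbar_lt (Rabs x) (CV_radius binom_re).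
Proof. apply CV_radius_binom_gt. intros; apply cnorm1_Re. Qed.

Lemma CV_radius_binom_im x : Rabs x < 1 -> Rbar_lt (Rabs x) (CV_radius binom_im).
Proof. apply CV_radius_binom_gt. intros; apply cnorm1_Im. Qed.

Lemma Derive_PSeries_binom_re t : Rabs t < 1 ->
  Derive (PSeries binom_re) t =
  (- Re s * PSeries binom_re t + Im s * PSeries binom_im t) / (1 + t).
Proof.
  intros Ht. assert (-1 < t) by (apply Rabs_def2 in Ht; lra).
  rewrite Derive_PSeries by (apply CV_radius_binom_re; auto).
  apply Rmult_eq_reg_l with (1 + t); [|lra].
  rewrite (PSeries_recurrence_ode _ _ _ _ _ (CV_radius_binom_re t Ht) (CV_radius_binom_im t Ht)
             binom_re_S).
  field. lra.
Qed.

Lemma Derive_PSeries_binom_im t : Rabs t < 1 ->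
  Derive (PSeries binom_im) t =
  (- Im s * PSeries binom_re t - Re s * PSeries binom_im t) / (1 + t).
Proof.
  intros Ht. assert (-1 < t) by (apply Rabs_def2 in Ht; lra).
  rewrite Derive_PSeries by (apply CV_radius_binom_im; auto).
  apply Rmult_eq_reg_l with (1 + t); [|lra].
  rewrite (PSeries_recurrence_ode _ _ _ _ _ (CV_radius_binom_im t Ht) (CV_radius_binom_re t Ht)
             binom_im_S).
  field. lra.
Qed.

(* Real and imaginary parts of [(sum_l binom(-s,l) t^l) * (1+t)^s]; they have zero
   derivative on (-1, 1). *)
Definition binom_prod_re (t : R) : R :=
  PSeries binom_re t * (exp (Re s * ln (1 + t)) * cos (Im s * ln (1 + t))) -
  PSeries binom_im t * (exp (Re s * ln (1 + t)) * sin (Im s * ln (1 + t))).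
Definition binom_prod_im (t : R) : R :=
  PSeries binom_re t * (exp (Re s * ln (1 + t)) * sin (Im s * ln (1 + t))) +
  PSeries binom_im t * (exp (Re s * ln (1 + t)) * cos (Im s * ln (1 + t))).

Lemma is_derive_binom_prod_re t : Rabs t < 1 -> is_derive binom_prod_re t 0.
Proof.
  intros Ht. assert (-1 < t) by (apply Rabs_def2 in Ht; lra).
  unfold binom_prod_re. auto_derive.
  - repeat split; try lra; apply ex_derive_PSeries;
      [apply CV_radius_binom_re | apply CV_radius_binom_im]; auto.
  - change (fun x => PSeries binom_re x) with (PSeries binom_re).
    change (fun x => PSeries binom_im x) with (PSeries binom_im).
    rewrite Derive_PSeries_binom_re, Derive_PSeries_binom_im by auto. field. lra.
Qed.

Lemma is_derive_binom_prod_im t : Rabs t < 1 -> is_derive binom_prod_im t 0.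
Proof.
  intros Ht. assert (-1 < t) by (apply Rabs_def2 in Ht; lra).
  unfold binom_prod_im. auto_derive.
  - repeat split; try lra; apply ex_derive_PSeries;
      [apply CV_radius_binom_re | apply CV_radius_binom_im]; auto.
  - change (fun x => PSeries binom_re x) with (PSeries binom_re).
    change (fun x => PSeries binom_im x) with (PSeries binom_im).
    rewrite Derive_PSeries_binom_re, Derive_PSeries_binom_im by auto. field. lra.
Qed.

Lemma csum_cbinom_pow t : 0 <= t < 1 ->
  csum (fun l => Cmult (cbinom (Copp s) l) (RtoC (t ^ l))) = Cinv (cpow (1 + t) s).
Proof.
  intros Ht. assert (Ht' : Rabs t < 1) by (apply Rabs_def1; lra).
  assert (E0 : binom_re 0 = 1 /\ binom_im 0 = 0)
    by (unfold binom_re, binom_im; rewrite cbinom_0; simpl; auto).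
  assert (Hre : binom_prod_re t = 1).
  { rewrite (is_derive_0_const _ t Ht is_derive_binom_prod_re). unfold binom_prod_re.
    rewrite !PSeries_0, (proj1 E0), (proj2 E0), Rplus_0_r, ln_1, !Rmult_0_r, exp_0, cos_0,
      sin_0. ring. }
  assert (Him : binom_prod_im t = 0).
  { rewrite (is_derive_0_const _ t Ht is_derive_binom_prod_im). unfold binom_prod_im.
    rewrite !PSeries_0, (proj1 E0), (proj2 E0), Rplus_0_r, ln_1, !Rmult_0_r, exp_0, cos_0,
      sin_0. ring. }
  set (A := (PSeries binom_re t, PSeries binom_im t)).
  assert (Ecsum : csum (fun l => Cmult (cbinom (Copp s) l) (RtoC (t ^ l))) = A).
  { unfold csum, A. f_equal; rewrite PSeries_eq; apply Series_ext; intros n;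
      unfold binom_re, binom_im; destruct (cbinom (Copp s) n) as [x y];
      change (scal ?u ?v) with (u * v); rewrite <- pow_n_pow;
      unfold Cmult, RtoC, Re, Im; simpl; ring. }
  assert (Eprod : Cmult A (cpow (1 + t) s) = RtoC 1).
  { unfold A, cpow, Cmult, RtoC; simpl. unfold binom_prod_re, binom_prod_im in *.
    f_equal; lra. }
  assert (NZ : cpow (1 + t) s <> RtoC 0).
  { intros E. rewrite E, Cmult_0_r in Eprod. injection Eprod. lra. }
  rewrite Ecsum, <- (Cmult_1_r A), <- (Cinv_r (cpow (1 + t) s)), Cmult_assoc, Eprod by auto.
  apply Cmult_1_l.
Qed.

End BinomialSeries.

Lemma cpow_mult x y s : 0 < x -> 0 < y -> cpow (x * y) s = Cmult (cpow x s) (cpow y s).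
Proof.
  intros Hx Hy. unfold cpow. rewrite ln_mult by auto.
  rewrite !Rmult_plus_distr_l, exp_plus, cos_plus, sin_plus.
  unfold Cmult, Re, Im; simpl. f_equal; ring.
Qed.

Lemma cpow_plus_nat x s l : 0 < x ->
  cpow x (Cplus s (RtoC (INR l))) = Cmult (cpow x s) (RtoC (x ^ l)).
Proof.
  intros Hx. rewrite <- (Rpower_pow l x Hx). unfold cpow, Rpower. simpl.
  rewrite Rplus_0_r, Rmult_plus_distr_r, exp_plus. unfold Cmult, Re, Im; simpl. f_equal; ring.
Qed.

Lemma cpow_neq0 x s : 0 < x -> cpow x s <> RtoC 0.
Proof.
  intros Hx E. assert (S2 := sin2_cos2 (Im s * ln x)). unfold Rsqr in S2.
  unfold cpow in E. injection E; intros E2 E1.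
  assert (P := exp_pos (Re s * ln x)).
  apply Rmult_integral in E1. apply Rmult_integral in E2. nra.
Qed.

Lemma Cinv_cpow x s : 0 < x -> Cinv (cpow x s) =
  (Rpower x (- Re s) * cos (Im s * ln x), - (Rpower x (- Re s) * sin (Im s * ln x))).
Proof.
  intros Hx. unfold cpow, Cinv, Rpower. cbn [fst snd].
  replace (exp (- Re s * ln x)) with (/ exp (Re s * ln x))
    by (rewrite <- exp_Ropp; f_equal; ring).
  assert (P := exp_pos (Re s * ln x)).
  assert (S2 := sin2_cos2 (Im s * ln x)). unfold Rsqr in S2.
  set (a := exp (Re s * ln x)) in *. set (c := cos (Im s * ln x)) in *.
  set (d := sin (Im s * ln x)) in *.
  replace ((a * c) ^ 2 + (a * d) ^ 2) with (a ^ 2)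
    by (replace (a ^ 2) with (a ^ 2 * (d * d + c * c)) by (rewrite S2; ring); ring).
  f_equal; field; lra.
Qed.

Lemma cnorm1_Cinv_cpow_le x s : 0 < x -> cnorm1 (Cinv (cpow x s)) <= 2 * Rpower x (- Re s).
Proof.
  intros Hx. rewrite Cinv_cpow by auto. unfold cnorm1. cbn [Re Im fst snd].
  rewrite Rabs_Ropp, !Rabs_mult, (Rabs_pos_eq (Rpower _ _)) by (apply Rlt_le, exp_pos).
  assert (P : 0 < Rpower x (- Re s)) by apply exp_pos.
  assert (C1 : Rabs (cos (Im s * ln x)) <= 1) by (apply Rabs_le; apply COS_bound).
  assert (C2 : Rabs (sin (Im s * ln x)) <= 1) by (apply Rabs_le; apply SIN_bound).
  nra.
Qed.

Lemma Cmod_pow_n z M : Cmod (pow_n z M) = Cmod z ^ M.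
Proof.
  induction M; simpl; [apply Cmod_1|].
  change (mult z (pow_n z M)) with (Cmult z (pow_n z M)). rewrite Cmod_mult, IHM. auto.
Qed.

Lemma cnorm1_pow_n_mult_le z M Y : cnorm1 (Cmult (pow_n z M) Y) <= 2 * Cmod z ^ M * cnorm1 Y.
Proof.
  eapply Rle_trans; [apply cnorm1_le_Cmod|]. rewrite Cmod_mult, Cmod_pow_n.
  assert (0 <= Cmod z ^ M) by (apply pow_le, Cmod_ge_0).
  generalize (Cmod_le_cnorm1 Y). nra.
Qed.

(* Binomial expansion of [(X + a)^-s = X^-s (1 + a/X)^-s]. *)
Lemma Cinv_cpow_plus_expansion (Z : C) s X a : 1 <= X -> 0 < a < 1 ->
  Cmult Z (Cinv (cpow (X + a) s)) =
  csum (fun l => Cmult (Cmult (cbinom (Copp s) l) (RtoC (a ^ l)))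
                       (Cmult Z (Cinv (cpow X (Cplus s (RtoC (INR l))))))).
Proof.
  intros HX Ha. set (t := a / X).
  assert (Ht : 0 <= t < 1).
  { split; [apply Rdiv_le_0_compat; lra|].
    apply Rmult_lt_reg_r with X; [lra|]. unfold t, Rdiv. rewrite Rmult_assoc, Rinv_l; lra. }
  replace (X + a) with (X * (1 + t)) by (unfold t; field; lra).
  rewrite cpow_mult by lra.
  assert (NZ1 := cpow_neq0 X s ltac:(lra)).
  assert (NZ2 := cpow_neq0 (1 + t) s ltac:(lra)).
  replace (Cinv (Cmult (cpow X s) (cpow (1 + t) s))) with
    (Cmult (Cinv (cpow X s)) (Cinv (cpow (1 + t) s))) by (field; auto).
  rewrite <- (csum_cbinom_pow s t Ht), Cmult_assoc, <- csum_scal_l.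
  2: { apply (ex_csum_le _ (fun l => cnorm1 (cbinom (Copp s) l) * t ^ l)).
       - intros l. eapply Rle_trans; [apply cnorm1_mult|].
         rewrite cnorm1_RtoC, Rabs_pos_eq by (apply pow_le; lra). lra.
       - apply ex_series_cbinom_geom; auto. }
  apply csum_ext. intros l. rewrite cpow_plus_nat by lra.
  assert (NZ3 : RtoC (X ^ l) <> RtoC 0) by (intros E; injection E; apply pow_nonzero; lra).
  replace (RtoC (t ^ l)) with (Cmult (RtoC (a ^ l)) (Cinv (RtoC (X ^ l)))).
  - field. split; auto.
  - unfold t, Rdiv. rewrite Rpow_mult_distr, pow_inv, RtoC_mult, RtoC_inv; auto.
    apply pow_nonzero; lra.
Qed.

Lemma Rinv_qnum_le q l : 1 < q -> 0 < / qnum q (S l) <= (/ q) ^ l.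
Proof.
  intros Hq. unfold qnum.
  assert (H1 : 1 <= q ^ l) by (apply pow_R1_Rle; lra).
  assert (H2 : q ^ l * (q - 1) <= q ^ S l - 1) by (simpl; nra).
  assert (H3 : 0 < q ^ l * (q - 1)) by nra.
  rewrite pow_inv. split; [apply Rinv_0_lt_compat, Rdiv_lt_0_compat; lra|].
  replace (/ ((q ^ S l - 1) / (q - 1))) with ((q - 1) / (q ^ S l - 1)) by (field; lra).
  apply Rle_trans with ((q - 1) * / (q ^ l * (q - 1))).
  - unfold Rdiv. apply Rmult_le_compat_l; [lra | apply Rinv_le_contravar; auto].
  - right. field. split; lra.
Qed.

Lemma jackson01_pow q l : 1 < q ->
  (q - 1) * Series (fun n => (/ q ^ S n) ^ l * / q ^ S n) = / qnum q (S l).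
Proof.
  intros Hq. assert (H1 : 1 <= q ^ l) by (apply pow_R1_Rle; lra).
  assert (H2 : 1 < q ^ S l) by (simpl; nra).
  set (x := (/ q) ^ S l).
  assert (Ex : x = / q ^ S l) by apply pow_inv.
  assert (Hx0 : 0 < x) by (rewrite Ex; apply Rinv_0_lt_compat; lra).
  assert (Hx1 : x < 1) by (rewrite Ex, <- Rinv_1; apply Rinv_lt_contravar; lra).
  rewrite (Series_ext _ (fun n => x * x ^ n)).
  - rewrite Series_scal_l, Series_geom by (rewrite Rabs_pos_eq; lra).
    rewrite Ex. unfold qnum. field. repeat split; lra.
  - intros n. unfold x. rewrite <- pow_inv, (Rmult_comm _ ((/ q) ^ S n)), !tech_pow_Rmult,
      <- !pow_mult. f_equal. lia.
Qed.

Lemma jackson_node_bounds q n : 1 < q -> 0 < / q ^ S n <= / q.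
Proof.
  intros Hq. assert (Hqn : q <= q ^ S n) by (simpl; generalize (pow_R1_Rle q n); nra).
  split; [apply Rinv_0_lt_compat | apply Rinv_le_contravar]; lra.
Qed.

Lemma ex_series_jackson_nodes q : 1 < q -> ex_series (fun n => / q ^ S n).
Proof.
  intros Hq.
  assert (Hq1 : 0 < / q < 1)
    by (split; [apply Rinv_0_lt_compat | rewrite <- Rinv_1; apply Rinv_lt_contravar]; lra).
  apply (ex_series_ext (fun n => / q * (/ q) ^ n)); [intros n; rewrite <- pow_inv; reflexivity|].
  apply ex_series_Rscal_l, ex_series_geom. rewrite Rabs_pos_eq; lra.
Qed.

Lemma jackson01_pseries q (c : nat -> C) (f : R -> C) : 1 < q ->
  ex_series (fun l => cnorm1 (c l) * (/ q) ^ l) ->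
  (forall a, 0 < a < 1 -> f a = csum (fun l => Cmult (c l) (RtoC (a ^ l)))) ->
  jackson01 q f = csum (fun l => Cmult (c l) (RtoC (/ qnum q (S l)))).
Proof.
  intros Hq Hc Hf. unfold jackson01.
  assert (Hq1 : 0 < / q < 1)
    by (split; [apply Rinv_0_lt_compat | rewrite <- Rinv_1; apply Rinv_lt_contravar]; lra).
  set (e := fun l => cnorm1 (c l) * (/ q) ^ l).
  assert (He : forall l, 0 <= e l)
    by (intros l; apply Rmult_le_pos; [apply cnorm1_ge0 | apply pow_le; lra]).
  set (a := fun n => / q ^ S n).
  assert (Ha : forall n, 0 < a n <= / q) by (intros n; apply jackson_node_bounds; auto).
  assert (Hsa : ex_series a) by (apply ex_series_jackson_nodes; auto).
  set (X := fun n l => Cmult (c l) (RtoC (a n ^ l * a n))).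
  assert (HX : forall n l, cnorm1 (X n l) <= a n * e l).
  { intros n l. destruct (Ha n) as [Han Haq]. unfold X, e.
    eapply Rle_trans; [apply cnorm1_mult|].
    rewrite cnorm1_RtoC, Rabs_pos_eq by (apply Rmult_le_pos; [apply pow_le|]; lra).
    rewrite <- Rmult_assoc, (Rmult_comm (a n)). apply Rmult_le_compat_r; [lra|].
    apply Rmult_le_compat_l; [apply cnorm1_ge0 | apply pow_incr; lra]. }
  assert (Hrow : forall n, Cmult (f (/ q ^ S n)) (RtoC (/ q ^ S n)) = csum (fun l => X n l)).
  { intros n. destruct (Ha n) as [Han Haq]. fold (a n).
    rewrite Hf by lra. rewrite Cmult_comm, <- csum_scal_l.
    - apply csum_ext. intros l. unfold X. rewrite RtoC_mult. ring.
    - apply (ex_csum_le _ e); [|exact Hc]. intros l. eapply Rle_trans; [apply cnorm1_mult|].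
      rewrite cnorm1_RtoC, Rabs_pos_eq by (apply pow_le; lra).
      apply Rmult_le_compat_l; [apply cnorm1_ge0 | apply pow_incr; lra]. }
  rewrite (csum_ext _ _ Hrow).
  rewrite (csum_csum_swap X a e), <- csum_scal_l; auto; [| |intros n; destruct (Ha n); lra].
  - apply csum_ext. intros l.
    rewrite (csum_ext _ (fun n => Cmult (c l) (RtoC (a n ^ l * a n)))) by reflexivity.
    rewrite csum_scal_l, csum_RtoC.
    + change (Series (fun n => a n ^ l * a n)) with
        (Series (fun n => (/ q ^ S n) ^ l * / q ^ S n)).
      rewrite <- (jackson01_pow q l Hq), RtoC_mult. ring.
    + apply (ex_csum_le _ a); auto. intros n. rewrite cnorm1_RtoC. destruct (Ha n) as [Han Haq].
      assert (a n ^ l <= 1) by (rewrite <- (pow1 l); apply pow_incr; lra).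
      rewrite Rabs_pos_eq by (apply Rmult_le_pos; [apply pow_le|]; lra).
      assert (0 <= a n ^ l) by (apply pow_le; lra). nra.
  - apply (ex_csum_le _ (fun l => e l * Series a)); [|apply ex_series_scal_r; auto].
    intros l. rewrite Rmult_comm, <- Series_scal_r. apply cnorm1_csum_le; auto.
    apply ex_series_scal_r; auto.
Qed.

Section JacksonPhi.

Variables (j : nat) (z s : C) (h : nat -> R).

Hypothesis j_ge1 : (1 <= j)%nat.
Hypothesis h_ge0 : forall M, 0 <= h M.
Hypothesis h_summable : msummable j h.
Hypothesis h_dominates : forall M, Cmod z ^ M * Rpower (INR M + INR j) (- Re s) <= h M.

(* Terms of [z^-j Li_j(z, s + l)] after the shift of all summation indices down to 0. *)
Definition Li_term (l M : nat) : C :=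
  Cmult (pow_n z M) (Cinv (cpow (INR M + INR j) (Cplus s (RtoC (INR l))))).

Definition Li_shift (l : nat) : C := msum 0 j (Li_term l).

Lemma INR_plus_j_ge1 M : 1 <= INR M + INR j.
Proof. generalize (pos_INR M) (le_INR 1 j j_ge1); simpl; lra. Qed.

Lemma cnorm1_Li_term_le l M : cnorm1 (Li_term l M) <= 4 * h M.
Proof.
  assert (HX := INR_plus_j_ge1 M).
  unfold Li_term. eapply Rle_trans; [apply cnorm1_pow_n_mult_le|].
  assert (B1 := cnorm1_Cinv_cpow_le (INR M + INR j) (Cplus s (RtoC (INR l))) ltac:(lra)).
  replace (Re (Cplus s (RtoC (INR l)))) with (Re s + INR l) in B1
    by (unfold Re, Cplus, RtoC; simpl; ring).
  assert (B2 : Rpower (INR M + INR j) (- (Re s + INR l)) <= Rpower (INR M + INR j) (- Re s))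
    by (apply Rle_Rpower; auto; generalize (pos_INR l); lra).
  assert (B3 := h_dominates M). assert (0 <= Cmod z ^ M) by (apply pow_le, Cmod_ge_0).
  nra.
Qed.

Lemma msummable_4h : msummable j (fun M => 4 * h M).
Proof. apply msummable_scal; auto; lra. Qed.

Lemma cnorm1_Li_shift_le l : cnorm1 (Li_shift l) <= msumR j (fun M => 4 * h M).
Proof. apply cnorm1_msum_le; [apply cnorm1_Li_term_le | apply msummable_4h]. Qed.

Lemma Li_shift_spec l : Li j z (Cplus s (RtoC (INR l))) = Cmult (pow_n z j) (Li_shift l).
Proof.
  unfold Li, Li_shift. rewrite msum_shift, <- (msum_scal_l j _ _ _ (cnorm1_Li_term_le l))
    by apply msummable_4h.
  apply msum_ext. intros M. unfold Li_term.
  rewrite pow_n_plus, plus_INR. change (mult ?a ?b) with (Cmult a b). ring.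
Qed.

(* Expand every term [(M + j + a)^-s] binomially in [a] and swap the sums. *)
Lemma Phi_shift_pseries a : 0 < a < 1 ->
  Phi j z s (a + INR j) =
  csum (fun l => Cmult (Cmult (cbinom (Copp s) l) (Li_shift l)) (RtoC (a ^ l))).
Proof.
  intros Ha.
  set (F := fun M l => Cmult (Cmult (cbinom (Copp s) l) (RtoC (a ^ l))) (Li_term l M)).
  set (e := fun l => cnorm1 (cbinom (Copp s) l) * a ^ l).
  assert (HF : forall M l, cnorm1 (F M l) <= 4 * h M * e l).
  { intros M l. unfold F, e. eapply Rle_trans; [apply cnorm1_mult|].
    rewrite (Rmult_comm (4 * h M)). apply Rmult_le_compat; try apply cnorm1_ge0.
    - eapply Rle_trans; [apply cnorm1_mult|].
      rewrite cnorm1_RtoC, Rabs_pos_eq by (apply pow_le; lra). lra.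
    - apply cnorm1_Li_term_le. }
  transitivity (msum 0 j (fun M => csum (F M))).
  - unfold Phi. apply msum_ext. intros M.
    replace (INR M + (a + INR j)) with ((INR M + INR j) + a) by ring.
    apply Cinv_cpow_plus_expansion; auto. apply INR_plus_j_ge1.
  - rewrite (msum_csum_swap j F (fun M => 4 * h M) e); auto.
    + apply csum_ext. intros l. unfold F, Li_shift.
      rewrite (msum_scal_l j _ _ _ (cnorm1_Li_term_le l)) by apply msummable_4h. ring.
    + intros M. generalize (h_ge0 M). lra.
    + intros l. apply Rmult_le_pos; [apply cnorm1_ge0 | apply pow_le; lra].
    + apply msummable_4h.
    + apply ex_series_cbinom_geom. lra.
Qed.

Lemma jackson01_Phi_shift q : 1 < q -> z <> RtoC 0 ->
  jackson01 q (fun a => Phi j z s (a + INR j)) =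
  Cmult (Cinv (pow_n z j))
    (csum (fun l => Cmult (cbinom (Copp s) l)
                          (Cmult (Li j z (Cplus s (RtoC (INR l))))
                                 (RtoC (/ qnum q (S l)))))).
Proof.
  intros Hq Hz.
  assert (Hq1 : 0 < / q < 1)
    by (split; [apply Rinv_0_lt_compat | rewrite <- Rinv_1; apply Rinv_lt_contravar]; lra).
  assert (Hzj : pow_n z j <> RtoC 0).
  { intros E. apply (pow_nonzero (Cmod z) j); [now apply Cmod_gt_0 in Hz; lra|].
    rewrite <- Cmod_pow_n, E. apply Cmod_0. }
  set (H := msumR j (fun M => 4 * h M)).
  assert (Hcoef : forall l, cnorm1 (Cmult (cbinom (Copp s) l) (Li_shift l)) <=
                            cnorm1 (cbinom (Copp s) l) * H).
  { intros l. eapply Rle_trans; [apply cnorm1_mult|].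
    apply Rmult_le_compat_l; [apply cnorm1_ge0 | apply cnorm1_Li_shift_le]. }
  set (b := fun l => cnorm1 (cbinom (Copp s) l) * (/ q) ^ l * H).
  assert (Hsum : ex_series b) by (apply ex_series_scal_r, ex_series_cbinom_geom; lra).
  rewrite (jackson01_pseries q (fun l => Cmult (cbinom (Copp s) l) (Li_shift l))); auto.
  - rewrite (csum_ext (fun l => Cmult (cbinom (Copp s) l)
                  (Cmult (Li j z (Cplus s (RtoC (INR l)))) (RtoC (/ qnum q (S l)))))
                (fun l => Cmult (pow_n z j) (Cmult (Cmult (cbinom (Copp s) l) (Li_shift l))
                  (RtoC (/ qnum q (S l))))))
      by (intros l; rewrite Li_shift_spec; ring).
    rewrite csum_scal_l; [field; auto|].
    apply (ex_csum_le _ b); [intros l; unfold b | exact Hsum].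
    destruct (Rinv_qnum_le q l Hq) as [Hq0 Hql].
    eapply Rle_trans; [apply cnorm1_mult|]. rewrite cnorm1_RtoC, Rabs_pos_eq by lra.
    replace (cnorm1 (cbinom (Copp s) l) * (/ q) ^ l * H)
      with (cnorm1 (cbinom (Copp s) l) * H * (/ q) ^ l) by ring.
    apply Rmult_le_compat; auto using cnorm1_ge0; lra.
  - apply (ex_series_Rabs_le _ b); [intros l; unfold b | exact Hsum].
    rewrite Rabs_pos_eq by (apply Rmult_le_pos; [apply cnorm1_ge0 | apply pow_le; lra]).
    replace (cnorm1 (cbinom (Copp s) l) * (/ q) ^ l * H)
      with (cnorm1 (cbinom (Copp s) l) * H * (/ q) ^ l) by ring.
    apply Rmult_le_compat_r; [apply pow_le; lra | apply Hcoef].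
  - intros a Ha. apply Phi_shift_pseries; auto.
Qed.

End JacksonPhi.

Lemma Phi_dominator (j : nat) (z s : C) : (1 <= j)%nat -> z <> RtoC 0 ->
  (Cmod z < 1 \/ (Cmod z = 1 /\ INR j < Re s)) ->
  exists h, (forall M, 0 <= h M) /\ msummable j h /\
            forall M, Cmod z ^ M * Rpower (INR M + INR j) (- Re s) <= h M.
Proof.
  intros Hj Hz Hc. assert (HjR : 1 <= INR j) by (apply (le_INR 1); auto).
  assert (Hpower : forall K p, 0 <= K -> INR j < p ->
    (forall M, Cmod z ^ M * Rpower (INR M + INR j) (- Re s) <=
               K * Rpower (INR M + INR j) (- p)) ->
    exists h, (forall M, 0 <= h M) /\ msummable j h /\
              forall M, Cmod z ^ M * Rpower (INR M + INR j) (- Re s) <= h M).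
  { intros K p HK Hp Hb. exists (fun M => K * Rpower (INR M + INR j) (- p)).
    split; [intros M; apply Rmult_le_pos; [auto | apply Rlt_le, exp_pos]|]. split; auto.
    destruct (msummable_Rpower j p Hp) as [K' [_ HK']].
    apply msummable_scal; auto. apply (HK' (INR j) HjR). }
  destruct Hc as [Hc | [Hc Hs]].
  - (* the geometric decay of [|z|^M] pays for one extra power [(M + j)^-(j+1)] *)
    assert (Hz0 : 0 < Cmod z) by (apply Cmod_gt_0; auto).
    destruct (pow_Rpower_bounded (Cmod z) (INR j) (INR j + 1 - Re s) (conj Hz0 Hc) HjR)
      as [K [HK HKb]].
    apply (Hpower K (INR j + 1)); auto; [lra|]. intros M.
    replace (- Re s) with ((INR j + 1 - Re s) + - (INR j + 1)) by ring.
    rewrite Rpower_plus, <- Rmult_assoc.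
    apply Rmult_le_compat_r; [apply Rlt_le, exp_pos | apply HKb].
  - apply (Hpower 1 (Re s)); [lra | auto |]. intros M. rewrite Hc, pow1. lra.
Qed.

Theorem lemma3p1 (q : R) (k r : nat) (z s : C) :
  1 < q -> (0 < k)%nat -> (r < k)%nat -> z <> RtoC 0 ->
  (Cmod z < 1 \/ (Cmod z = 1 /\ INR k < Re s)) ->
  jackson01 q (fun a => Phi (k - r) z s (a + INR (k - r))) =
  Cmult (Cinv (pow_n z (k - r)))
    (csum (fun l => Cmult (cbinom (Copp s) l)
                          (Cmult (Li (k - r) z (Cplus s (RtoC (INR l))))
                                 (RtoC (/ qnum q (S l)))))).
Proof.
  intros Hq Hk Hr Hz Hc.
  assert (Hj : (1 <= k - r)%nat) by lia.
  destruct (Phi_dominator (k - r) z s Hj Hz) as [h [Hh0 [Hh Hdom]]].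
  { destruct Hc as [Hc | [Hc Hs]]; [left; auto | right; split; auto].
    apply Rle_lt_trans with (INR k); [apply le_INR; lia | auto]. }
  exact (jackson01_Phi_shift (k - r) z s h Hj Hh0 Hh Hdom q Hq Hz).
Qed.
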